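(* For every finite partial IP loop $P$ there exists a finite partial IP loop $Q$ with $P\le Q$ and $3\mid o_3(Q)$.
   Context: A partial IP loop is a set $P$ with a partial binary operation $(x,y)\mapsto xy$ defined on a subset $D(P)\subseteq P\times P$ (the domain) such that: (1) there is $1\in P$ with $(1,x),(x,1)\in D(P)$ and $1x=x1=x$ for all $x\in P$; (2) for each $x\in P$ there is a unique $y\in P$, denoted $x^{-1}$, with $(x,y),(y,x)\in D(P)$ and $xy=yx=1$; (3) whenever $(x,y)\in D(P)$, we have $(x^{-1},xy),(xy,y^{-1})\in D(P)$ and $x^{-1}(xy)=y$, $(xy)y^{-1}=x$. A partial IP loop $(Q,* )$ extends $(P,\cdot)$ (written $P\le Q$) if $P\subseteq Q$, $D(P)\subseteq D(Q)$ and $x\cdot y=x*y$ for all $(x,y)\in D(P)$. $O_3(P)=\{x\in P: (x,x)\in D(P),\ (x,xx)\in D(P),\ x\neq 1,\ x(xx)=1\}$ and $o_3(P)=\#O_3(P)$. *)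

From mathcomp Require Import all_boot.
Set Implicit Arguments. Unset Strict Implicit. Unset Printing Implicit Defensive.

(* A partial binary operation on T is encoded as [m : T -> T -> option T]:
   (x,y) is in the domain D iff [m x y] is [Some _], and then xy is its value.
   [e] is the identity element 1. *)

Definition is_inv (T : Type) (m : T -> T -> option T) (e x y : T) : Prop :=
  m x y = Some e /\ m y x = Some e.

Definition is_partial_IP_loop (T : Type) (m : T -> T -> option T) (e : T) : Prop :=
  (forall x, m e x = Some x /\ m x e = Some x) /\
  (forall x, exists y, is_inv m e x y /\ forall y', is_inv m e x y' -> y' = y) /\
  (forall x y z xi yi, m x y = Some z -> is_inv m e x xi -> is_inv m e y yi ->
     m xi z = Some y /\ m z yi = Some x).

Definition O3 (T : finType) (m : T -> T -> option T) (e : T) : pred T :=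
  fun x => (x != e) &&
    match m x x with
    | Some xx => m x xx == Some e
    | None => false
    end.

Definition o3 (T : finType) (m : T -> T -> option T) (e : T) : nat := #|O3 m e|.

From mathcomp Require Import all_boot.
Set Implicit Arguments. Unset Strict Implicit. Unset Printing Implicit Defensive.

(* Glue to P one copy of the cyclic group of order 3 for each element of
   O_3(P), identifying all identities with 1 and leaving products between
   different components undefined.  The loop axioms then only have to be
   checked inside one component, and every new copy contributes its two
   elements of order 3, so o_3 grows from k to k + 2k = 3k. *)

Lemma partial_IP_loop_inv1 (T : Type) (m : T -> T -> option T) (e ei : T) :
  is_partial_IP_loop m e -> is_inv m e e ei -> ei = e.
Proof.
case=> [Hid [Hinv _]] Hei.
have [y [_ Huniq]] := Hinv e.
by rewrite (Huniq _ Hei); symmetry; apply: Huniq; split; apply Hid.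
Qed.

Section AdjoinC3.
Variables (T : finType) (m : T -> T -> option T) (e : T) (I : finType).

Definition adjC3 := (T + I * bool)%type.

(* [inr (i, b)] and [inr (i, ~~ b)] are the two generators of the i-th copy
   of C_3: each is the square and the inverse of the other. *)
Definition adjC3_mul (u v : adjC3) : option adjC3 :=
  match u, v with
  | inl x, inl y => option_map inl (m x y)
  | inl x, inr p => if x == e then Some (inr p) else None
  | inr p, inl y => if y == e then Some (inr p) else None
  | inr (i, s), inr (j, t) =>
      if i == j then (if s == t then Some (inr (i, ~~ s)) else Some (inl e))
      else None
  end.

Lemma adjC3_invE (u v : adjC3) : is_inv adjC3_mul (inl e) u v ->
  match u with
  | inl x => exists y, v = inl y /\ is_inv m e x y
  | inr (i, s) => v = inr (i, ~~ s)
  end.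
Proof.
case: u => [x|[i s]]; case: v => [y|[j t]] /=; rewrite /is_inv /=.
- case E1: (m x y) => [a|]; case E2: (m y x) => [b|] //=; try by case.
  by case=> [[Ea] [Eb]]; exists y; rewrite E1 E2 Ea Eb.
- by case: (x == e); case.
- by case: (y == e); case.
- case: (i =P j) => [<-|]; last by move=> _ -[[]].
  rewrite eqxx; case: (s =P t) => [->|st]; first by rewrite eqxx => -[[]].
  by case: s t st => [] [].
Qed.

Hypothesis HP : is_partial_IP_loop m e.

Lemma adjC3_partial_IP_loop : is_partial_IP_loop adjC3_mul (inl e).
Proof.
have [Hid [Hinv HIP]] := HP.
split; last split.
- case=> [x|[i s]] /=; last by rewrite eqxx.
  by case: (Hid x) => -> ->.
- case=> [x|[i s]].
  + have [y [[Exy Eyx] Huniq]] := Hinv x.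
    exists (inl y); split; first by rewrite /is_inv /= Exy Eyx.
    by move=> v /adjC3_invE [y' [-> /Huniq ->]].
  + exists (inr (i, ~~ s)); split; last by move=> v /adjC3_invE.
    by rewrite /is_inv /= eqxx; case: s.
- move=> u v w ui vi + /adjC3_invE + /adjC3_invE.
  case: u v => [x|[i s]] [y|[j t]] /=.
  + case Exy: (m x y) => [z|] //= [<-] [x' [-> Hx]] [y' [-> Hy]] /=.
    by case: (HIP _ _ _ _ _ Exy Hx Hy) => -> ->.
  + case: (x =P e) => // -> [<-] [x' [-> /(partial_IP_loop_inv1 HP) ->]] -> /=.
    by rewrite !eqxx; case: t.
  + case: (y =P e) => // -> [<-] -> [y' [-> /(partial_IP_loop_inv1 HP) ->]] /=.
    by rewrite !eqxx negbK; case: s.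
  + case: (i =P j) => // <-; case: (s =P t) => [<-|st] [<-] -> -> /=.
      by rewrite eqxx negbK; case: s.
    have -> : t = ~~ s by case: s t st => [] [].
    by clear st; rewrite !eqxx negbK; case: s.
Qed.

Lemma O3_adjC3_inl x : O3 adjC3_mul (inl e) (inl x) = O3 m e x.
Proof. by rewrite /O3 /=; case: (m x x) => [xx|] //=; case: (m x xx). Qed.

Lemma O3_adjC3_inr p : O3 adjC3_mul (inl e) (inr p).
Proof. by case: p => i [] /=; rewrite /O3 /= !eqxx. Qed.

Lemma o3_adjC3 : o3 adjC3_mul (inl e) = o3 m e + 2 * #|I|.
Proof.
rewrite /o3 -!sum1_card big_sumType /=.
congr (_ + _); first exact: eq_bigl O3_adjC3_inl.
rewrite (eq_bigl predT) ?sum1_card; last exact: O3_adjC3_inr.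
by rewrite card_prod card_bool mulnC.
Qed.

End AdjoinC3.

Theorem proposition1 (T : finType) (m : T -> T -> option T) (e : T) :
  is_partial_IP_loop m e ->
  exists (U : finType) (m' : U -> U -> option U) (e' : U) (f : T -> U),
    [/\ is_partial_IP_loop m' e',
        injective f,
        (forall x y z, m x y = Some z -> m' (f x) (f y) = Some (f z))
      & 3 %| o3 m' e'].
Proof.
move=> HP; set I := 'I_(o3 m e).
exists (adjC3 T I), (@adjC3_mul _ m e I), (inl e), inl; split.
- exact: adjC3_partial_IP_loop.
- by move=> x y [].
- by move=> x y z /= ->.
- by rewrite o3_adjC3 card_ord -mulSn dvdn_mulr.
Qed.
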